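(* Let $(\mathcal{G}(u_0,v_0),-\Omega^2\,du\,dv)$ with radial function $r$ and stress-energy components $T_{uu},T_{uv},T_{vv}$ be as described in the context, satisfying assumptions (I)–(VII), and suppose there is $\delta>0$ such that, with $\mathcal{W}=\mathcal{W}(\delta)$, condition (A), $T_{uv}\Omega^{-2}<\frac1{4r^2}$, holds on $\mathcal{A}\cap\mathcal{W}$. If $\mathcal{A}\cap\mathcal{W}=\emptyset$, then $\mathcal{W}\cap\mathcal{R}$ contains a rectangle $K(u_1,v_1)=[0,u_1]\times[v_1,\infty)$ for some $u_1\in(0,u_0]$, $v_1\in[v_0,\infty)$.
   Context: Fix double null coordinates $(u,v)$ on $\mathbb{R}^2$ with Minkowski metric $-du\,dv$, time-oriented so that $u,v$ increase toward the future. For $u,v>0$, $K(u,v)=[0,u]\times[v,\infty)$. Fix $u_0,v_0>0$, $\mathcal{C}_{in}=[0,u_0]\times\{v_0\}$, $\mathcal{C}_{out}=\{0\}\times[v_0,\infty)$; causal notions refer to $K(u_0,v_0)$. Let $\mathcal{G}(u_0,v_0)\subset K(u_0,v_0)$ be globally hyperbolic, relatively open, containing $\mathcal{C}_{in}\cup\mathcal{C}_{out}$, with metric $-\Omega^2du\,dv$ ($\Omega>0$ smooth), smooth $r\ge0$ with $r>0$ on $\mathcal{C}_{in}\cup\mathcal{C}_{out}$, and smooth $T_{uu},T_{uv},T_{vv}$ (stress-energy components of the spherically symmetric spacetime $-\Omega^2du\,dv+r^2g_{S^2}$) satisfying $\partial_u(\Omega^{-2}\partial_u r)=-r\Omega^{-2}T_{uu}$,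 $\partial_v(\Omega^{-2}\partial_v r)=-r\Omega^{-2}T_{vv}$, $\partial_u m=2r^2\Omega^{-2}(T_{uv}\partial_u r-T_{uu}\partial_v r)$, $\partial_v m=2r^2\Omega^{-2}(T_{uv}\partial_v r-T_{vv}\partial_u r)$, with $m=\frac r2(1+4\Omega^{-2}\partial_u r\partial_v r)$. Define $\mathcal{R}=\{\partial_v r>0,\partial_u r<0\}$, $\mathcal{T}=\{\partial_v r<0,\partial_u r<0\}$, $\mathcal{A}=\{\partial_v r=0,\partial_u r<0\}$, $r_+=\sup_{\mathcal{C}_{out}}r$, $m_+=\sup_{\mathcal{C}_{out}}m$, $\mathcal{W}(\delta)=\{(u,v)\in\mathcal{G}(u_0,v_0):r\ge r_+-\delta\}$. Assumptions: (I) $T_{uu},T_{uv},T_{vv}\ge0$; (II) $J^-(\mathcal{G}(u_0,v_0))\subset\mathcal{G}(u_0,v_0)$; (III) $r\le r_+<\infty$ on $\mathcal{C}_{out}$; (IV) $0\le m\le m_+<\infty$ on $\mathcal{C}_{out}$; (V) $\partial_u r<0$ on $\mathcal{C}_{out}$; (VI) $\partial_v r>0$ on $\mathcal{C}_{out}$; (VII) (closures in $K(u_0,v_0)$) if $p\in\overline{\mathcal{R}}$, $q\in\overline{\mathcal{R}}\cap I^-(p)$, $J^-(p)\cap J^+(q)\setminus\{p\}\subset\mathcal{R}\cup\mathcal{A}$, then $p\in\mathcal{R}\cup\mathcal{A}$. *)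

From Stdlib Require Import Reals Lra List.
From Coquelicot Require Import Coquelicot.
Open Scope R_scope.

(* Points of R^2 are written in double null coordinates (u,v); subsets of
   R^2 are predicates R -> R -> Prop, functions are R -> R -> R. *)

Definition in_ball (a b eps u v : R) : Prop := (u - a) ^ 2 + (v - b) ^ 2 < eps ^ 2.

Definition open2 (U : R -> R -> Prop) : Prop :=
  forall a b, U a b -> exists eps, 0 < eps /\ forall u v, in_ball a b eps u v -> U u v.

Definition rel_open (K G : R -> R -> Prop) : Prop :=
  forall a b, G a b -> exists eps, 0 < eps /\
    forall u v, in_ball a b eps u v -> K u v -> G u v.

Definition closure2 (A : R -> R -> Prop) (a b : R) : Prop :=
  forall eps, 0 < eps -> exists u v, A u v /\ in_ball a b eps u v.

Definition compact2 (A : R -> R -> Prop) : Prop :=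
  forall (I : Type) (O : I -> R -> R -> Prop),
    (forall i, open2 (O i)) ->
    (forall u v, A u v -> exists i, O i u v) ->
    exists l : list I, forall u v, A u v -> exists i, In i l /\ O i u v.

Definition continuous2_at (f : R -> R -> R) (a b : R) : Prop :=
  forall eps, 0 < eps -> exists delta, 0 < delta /\
    forall u v, in_ball a b delta u v -> Rabs (f u v - f a b) < eps.

Definition pu (f : R -> R -> R) : R -> R -> R := fun u v => Derive (fun x => f x v) u.
Definition pv (f : R -> R -> R) : R -> R -> R := fun u v => Derive (fun y => f u y) v.

Fixpoint Ck (k : nat) (U : R -> R -> Prop) (f : R -> R -> R) : Prop :=
  match k with
  | O => forall a b, U a b -> continuous2_at f a b
  | S k' => (forall a b, U a b ->
                ex_derive (fun x => f x b) a /\ ex_derive (fun y => f a y) b)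
            /\ Ck k' U (pu f) /\ Ck k' U (pv f)
  end.

Definition smooth_on (U : R -> R -> Prop) (f : R -> R -> R) : Prop :=
  forall k, Ck k U f.

Definition Kset (u1 v1 : R) : R -> R -> Prop :=
  fun u v => 0 <= u <= u1 /\ v1 <= v.

Definition C_in (u0 v0 : R) : R -> R -> Prop := fun u v => 0 <= u <= u0 /\ v = v0.
Definition C_out (v0 : R) : R -> R -> Prop := fun u v => u = 0 /\ v0 <= v.

(* Causal structure of (a subset of) K(u0,v0) with metric -Omega^2 du dv,
   u and v increasing to the future.  Since K is a product of intervals,
   within K:  q in J^-(p) iff q <= p coordinatewise, q in I^-(p) iff
   q < p in both coordinates. *)
Definition Jminus (K : R -> R -> Prop) (a b : R) : R -> R -> Prop :=
  fun u v => K u v /\ u <= a /\ v <= b.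
Definition Jplus (K : R -> R -> Prop) (a b : R) : R -> R -> Prop :=
  fun u v => K u v /\ a <= u /\ b <= v.
Definition Iminus (K : R -> R -> Prop) (a b : R) : R -> R -> Prop :=
  fun u v => K u v /\ u < a /\ v < b.

(* Intrinsic causal relation of the spacetime G: there is a (continuous)
   future-directed causal curve inside G from (a,b) to (c,d), i.e. a curve
   along which u and v are both non-decreasing. *)
Definition causal_in (G : R -> R -> Prop) (a b c d : R) : Prop :=
  exists gu gv : R -> R,
    continuity gu /\ continuity gv /\
    gu 0 = a /\ gv 0 = b /\ gu 1 = c /\ gv 1 = d /\
    (forall s t, 0 <= s -> s <= t -> t <= 1 -> gu s <= gu t /\ gv s <= gv t) /\
    (forall t, 0 <= t -> t <= 1 -> G (gu t) (gv t)).

(* Global hyperbolicity: all causal diamonds J^+(p) cap J^-(q) are compact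
   (causality is automatic: u+v is a time function). *)
Definition globally_hyperbolic (G : R -> R -> Prop) : Prop :=
  forall a b c d, G a b -> G c d ->
    compact2 (fun u v => causal_in G a b u v /\ causal_in G u v c d).

Definition hawking_mass (Omega r : R -> R -> R) : R -> R -> R :=
  fun u v => r u v / 2 * (1 + 4 * / (Omega u v) ^ 2 * pu r u v * pv r u v).

Definition regR (G : R -> R -> Prop) (r : R -> R -> R) : R -> R -> Prop :=
  fun u v => G u v /\ pv r u v > 0 /\ pu r u v < 0.
Definition regT (G : R -> R -> Prop) (r : R -> R -> R) : R -> R -> Prop :=
  fun u v => G u v /\ pv r u v < 0 /\ pu r u v < 0.
Definition regA (G : R -> R -> Prop) (r : R -> R -> R) : R -> R -> Prop :=
  fun u v => G u v /\ pv r u v = 0 /\ pu r u v < 0.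

Definition regW (G : R -> R -> Prop) (r : R -> R -> R) (rplus delta : R) :
  R -> R -> Prop := fun u v => G u v /\ r u v >= rplus - delta.

From Stdlib Require Import Reals Lra Classical.
From Coquelicot Require Import Coquelicot.
Open Scope R_scope.

(* Pick v1 with r(0,v1) > r_+ - delta; since the regular region is relatively
   open, a short segment [0,u1] x {v1} lies in it with r > r_+ - delta.  The
   set of points of K(u1,v1) in R with r > r_+ - delta is then shown to be all
   of K(u1,v1) by continuous induction.  The only delicate step is a point p
   all of whose causal past in the rectangle is already good: by (VII), p is
   in R or in A; since d_v r >= 0 on the segment of the column below p,
   r(p) > r_+ - delta, so p in A would lie in A cap W, which is empty. *)

Lemma is_lub_lt (E : R -> Prop) (m x : R) :
  is_lub E m -> x < m -> exists y, E y /\ x < y.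
Proof.
  intros [Hub Hlub] Hx. apply NNPP; intro N.
  assert (m <= x); [|lra].
  apply Hlub. intros y Ey. apply Rnot_lt_le; intro. apply N; eauto.
Qed.

Lemma real_induction (a b : R) (Q : R -> Prop) :
  a <= b ->
  (forall x, a <= x <= b -> (forall y, a <= y < x -> Q y) -> Q x) ->
  (forall x, a <= x < b -> (forall y, a <= y <= x -> Q y) ->
     exists e, 0 < e /\ forall y, x < y < x + e -> y <= b -> Q y) ->
  forall x, a <= x <= b -> Q x.
Proof.
  intros Hab Hclosed Hopen.
  set (S := fun x => a <= x <= b /\ forall y, a <= y <= x -> Q y).
  assert (Sa : S a).
  { split; [lra|]. intros y Hy. replace y with a by lra.
    apply Hclosed; [lra|]. intros z Hz; lra. }
  destruct (completeness S) as [s Hs].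
  { exists b. intros x [Hx _]. lra. }
  { exists a. exact Sa. }
  assert (Has : a <= s) by (apply Hs; exact Sa).
  assert (Hsb : s <= b) by (apply Hs; intros x [Hx _]; lra).
  assert (Below : forall y, a <= y < s -> Q y).
  { intros y Hy. destruct (is_lub_lt S s y Hs) as [x [[_ Hx] Hyx]]; [lra|].
    apply Hx; lra. }
  assert (Qs : forall y, a <= y <= s -> Q y).
  { intros y Hy. destruct (Rlt_le_dec y s); [apply Below; lra|].
    replace y with s by lra. apply Hclosed; [lra | exact Below]. }
  destruct (Rlt_le_dec s b) as [Hlt|Hge].
  - exfalso. destruct (Hopen s (conj Has Hlt) Qs) as [e [He Hnext]].
    set (z := Rmin (s + e/2) b).
    assert (Hz1 : z <= s + e/2) by apply Rmin_l.
    assert (Hz2 : z <= b) by apply Rmin_r.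
    assert (Hsz : s < z) by (apply Rmin_glb_lt; lra).
    assert (z <= s); [|lra].
    apply Hs. split; [lra|]. intros y Hy.
    destruct (Rle_lt_dec y s); [apply Qs; lra|]. apply Hnext; lra.
  - intros x Hx. apply Qs; lra.
Qed.

Lemma in_ball_of_le_half (a b e u v : R) :
  0 < e -> Rabs (u - a) <= e/2 -> Rabs (v - b) <= e/2 -> in_ball a b e u v.
Proof.
  intros He H1 H2. unfold in_ball.
  apply Rabs_le_between in H1. apply Rabs_le_between in H2.
  assert ((u - a)^2 <= (e/2)^2) by nra. assert ((v - b)^2 <= (e/2)^2) by nra.
  nra.
Qed.

Lemma in_ball_le (a b e e' u v : R) :
  0 < e -> e <= e' -> in_ball a b e u v -> in_ball a b e' u v.
Proof. unfold in_ball. intros. nra. Qed.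

Lemma closure2_self (A : R -> R -> Prop) (a b : R) : A a b -> closure2 A a b.
Proof.
  intros HA eps Heps. exists a, b. split; [exact HA|].
  unfold in_ball. replace (a - a) with 0 by ring. replace (b - b) with 0 by ring.
  nra.
Qed.

Lemma rel_open_sub (K K' P : R -> R -> Prop) :
  (forall u v, K' u v -> K u v) -> rel_open K P -> rel_open K' P.
Proof.
  intros HK HP a b Pab. destruct (HP a b Pab) as [e [He H]].
  exists e. split; [exact He|]. intros u v Hb Hk. apply H; auto.
Qed.

Lemma continuous2_at_gt (f : R -> R -> R) (a b c : R) :
  continuous2_at f a b -> c < f a b ->
  exists e, 0 < e /\ forall u v, in_ball a b e u v -> c < f u v.
Proof.
  intros Hf Hc. destruct (Hf (f a b - c)) as [e [He H]]; [lra|].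
  exists e. split; [exact He|]. intros u v Hb.
  destruct (Rabs_def2 _ _ (H u v Hb)). lra.
Qed.

Lemma continuous2_at_lt (f : R -> R -> R) (a b c : R) :
  continuous2_at f a b -> f a b < c ->
  exists e, 0 < e /\ forall u v, in_ball a b e u v -> f u v < c.
Proof.
  intros Hf Hc. destruct (Hf (c - f a b)) as [e [He H]]; [lra|].
  exists e. split; [exact He|]. intros u v Hb.
  destruct (Rabs_def2 _ _ (H u v Hb)). lra.
Qed.

Lemma rel_open_and_gt (K P : R -> R -> Prop) (f : R -> R -> R) (c : R) :
  rel_open K P -> (forall u v, P u v -> continuous2_at f u v) ->
  rel_open K (fun u v => P u v /\ c < f u v).
Proof.
  intros HP Hf a b [Pab Hc].
  destruct (HP a b Pab) as [e1 [He1 H1]].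
  destruct (continuous2_at_gt f a b c (Hf a b Pab) Hc) as [e2 [He2 H2]].
  exists (Rmin e1 e2). split; [apply Rmin_pos; assumption|].
  assert (0 < Rmin e1 e2) by (apply Rmin_pos; assumption).
  intros u v Hb Hk. split.
  - apply H1; [|exact Hk]. apply in_ball_le with (Rmin e1 e2); auto using Rmin_l.
  - apply H2. apply in_ball_le with (Rmin e1 e2); auto using Rmin_r.
Qed.

Lemma rel_open_and_lt (K P : R -> R -> Prop) (f : R -> R -> R) (c : R) :
  rel_open K P -> (forall u v, P u v -> continuous2_at f u v) ->
  rel_open K (fun u v => P u v /\ f u v < c).
Proof.
  intros HP Hf a b [Pab Hc].
  destruct (HP a b Pab) as [e1 [He1 H1]].
  destruct (continuous2_at_lt f a b c (Hf a b Pab) Hc) as [e2 [He2 H2]].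
  exists (Rmin e1 e2). split; [apply Rmin_pos; assumption|].
  assert (0 < Rmin e1 e2) by (apply Rmin_pos; assumption).
  intros u v Hb Hk. split.
  - apply H1; [|exact Hk]. apply in_ball_le with (Rmin e1 e2); auto using Rmin_l.
  - apply H2. apply in_ball_le with (Rmin e1 e2); auto using Rmin_r.
Qed.

Lemma nondecreasing_of_derive_nonneg (f df : R -> R) (b c : R) :
  b <= c ->
  (forall x, b <= x <= c -> is_derive f x (df x)) ->
  (forall x, b <= x <= c -> 0 <= df x) ->
  f b <= f c.
Proof.
  intros Hbc Hd Hpos.
  destruct (MVT_gen f b c df) as [x [Hx Heq]];
    rewrite ?Rmin_left, ?Rmax_right in * by lra.
  - intros x Hx. apply Hd; lra.
  - intros x Hx. apply continuity_pt_filterlim, (ex_derive_continuous f).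
    exists (df x). apply Hd; lra.
  - assert (0 <= df x) by (apply Hpos; lra). nra.
Qed.

Section RectangleInduction.

Variables (u1 v1 : R) (P : R -> R -> Prop).
Hypothesis Hu1 : 0 <= u1.
Hypothesis HPopen : rel_open (Kset u1 v1) P.

Lemma rel_open_tube (v : R) :
  v1 <= v -> (forall u, 0 <= u <= u1 -> P u v) ->
  exists eta, 0 < eta /\
    forall u w, 0 <= u <= u1 -> v <= w <= v + eta -> P u w.
Proof.
  intros Hv Hrow.
  assert (Ball : forall x, 0 <= x <= u1 -> exists e, 0 < e /\
    forall u w, 0 <= u <= u1 -> Rabs (u - x) <= e -> v <= w <= v + e -> P u w).
  { intros x Hx. destruct (HPopen x v (Hrow x Hx)) as [e [He H]].
    exists (e/2). split; [lra|]. intros u w Hu Hux Hw.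
    apply H; [|split; lra]. apply in_ball_of_le_half; auto.
    apply Rabs_le_between; lra. }
  set (Q := fun x => exists eta, 0 < eta /\
    forall u w, 0 <= u <= x -> v <= w <= v + eta -> P u w).
  assert (HQ : forall x, 0 <= x <= u1 -> Q x).
  { apply real_induction; [exact Hu1| |].
    - intros x Hx IH. destruct (Ball x Hx) as [e [He H]].
      destruct (Rle_lt_dec x e) as [Hxe|Hxe].
      + exists e. split; [exact He|]. intros u w Hu Hw.
        apply H; [lra | apply Rabs_le_between; lra | exact Hw].
      + destruct (IH (x - e)) as [eta [Heta Hy]]; [lra|].
        exists (Rmin eta e). split; [apply Rmin_pos; assumption|].
        intros u w Hu Hw.
        assert (Rmin eta e <= eta) by apply Rmin_l.
        assert (Rmin eta e <= e) by apply Rmin_r.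
        destruct (Rle_lt_dec u (x - e)); [apply Hy; lra|].
        apply H; [lra | apply Rabs_le_between; lra | lra].
    - intros x Hx IH. destruct (Ball x ltac:(lra)) as [e [He H]].
      destruct (IH x) as [eta [Heta Hy]]; [lra|].
      exists e. split; [exact He|]. intros y Hy' Hyb.
      exists (Rmin eta e). split; [apply Rmin_pos; assumption|].
      intros u w Hu Hw.
      assert (Rmin eta e <= eta) by apply Rmin_l.
      assert (Rmin eta e <= e) by apply Rmin_r.
      destruct (Rle_lt_dec u x); [apply Hy; lra|].
      apply H; [lra | apply Rabs_le_between; lra | lra]. }
  destruct (HQ u1) as [eta [Heta H]]; [lra|].
  exists eta. split; [exact Heta|]. intros u w Hu Hw. apply H; lra.
Qed.

Hypothesis Pbottom : forall u, 0 <= u <= u1 -> P u v1.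
Hypothesis Pleft : forall v, v1 <= v -> P 0 v.
Hypothesis Pcorner : forall a b, 0 < a <= u1 -> v1 < b ->
  (forall u v, 0 <= u <= a -> v1 <= v <= b -> ~ (u = a /\ v = b) -> P u v) ->
  P a b.

Lemma rel_open_rect_induction (u v : R) : Kset u1 v1 u v -> P u v.
Proof.
  intros [Hu Hv].
  assert (Rows : forall w, v1 <= w <= v -> forall u, 0 <= u <= u1 -> P u w);
    [|apply Rows; lra].
  apply (real_induction v1 v (fun w => forall u, 0 <= u <= u1 -> P u w)); [lra| |].
  - intros w Hw IH.
    apply (real_induction 0 u1 (fun a => P a w)); [exact Hu1| |].
    + intros a Ha IHa.
      destruct (Req_dec a 0) as [->|Ha0]; [apply Pleft; lra|].
      destruct (Req_dec w v1) as [->|Hw1]; [apply Pbottom; lra|].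
      apply Pcorner; [lra | lra|].
      intros u' w' Hu' Hw' Hne. destruct (Rlt_le_dec w' w).
      * apply IH; lra.
      * assert (w' = w) by lra. subst w'.
        apply IHa. split; [lra|].
        destruct (Req_dec u' a); [exfalso; tauto | lra].
    + intros a Ha IHa.
      destruct (HPopen a w (IHa a ltac:(lra))) as [e [He H]].
      exists (e/2). split; [lra|]. intros b Hb Hbu. apply H.
      * apply in_ball_of_le_half; [lra| |]; apply Rabs_le_between; lra.
      * split; lra.
  - intros w Hw IH.
    destruct (rel_open_tube w ltac:(lra) (IH w ltac:(lra))) as [eta [Heta H]].
    exists eta. split; [exact Heta|]. intros y Hy _ u' Hu'. apply H; lra.
Qed.

End RectangleInduction.

Lemma regR_rel_open (u0 v0 : R) (G U : R -> R -> Prop) (r : R -> R -> R) :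
  rel_open (Kset u0 v0) G -> (forall u v, G u v -> U u v) -> Ck 1 U r ->
  rel_open (Kset u0 v0) (regR G r).
Proof.
  intros HG HGU [_ [Hcu Hcv]].
  assert (H : rel_open (Kset u0 v0)
    (fun u v => (G u v /\ 0 < pv r u v) /\ pu r u v < 0)).
  { apply rel_open_and_lt; [apply rel_open_and_gt|].
    - exact HG.
    - intros u v Gu. apply Hcv, HGU, Gu.
    - intros u v [Gu _]. apply Hcu, HGU, Gu. }
  intros a b [Ga [Hv Hu]]. destruct (H a b) as [e [He He']]; [tauto|].
  exists e. split; [exact He|]. intros u v Hb Hk.
  destruct (He' u v Hb Hk) as [[? ?] ?]. split; [|split]; assumption.
Qed.

Lemma r_le_along_column (U : R -> R -> Prop) (r : R -> R -> R) (a b c : R) :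
  Ck 1 U r -> b <= c ->
  (forall v, b <= v <= c -> U a v /\ 0 <= pv r a v) ->
  r a b <= r a c.
Proof.
  intros [Hd _] Hbc Hcol.
  apply (nondecreasing_of_derive_nonneg (fun y => r a y) (pv r a)); [exact Hbc| |].
  - intros x Hx. apply Derive_correct, Hd, Hcol, Hx.
  - intros x Hx. apply Hcol, Hx.
Qed.

Definition regR_above (G : R -> R -> Prop) (r : R -> R -> R) (rho : R) :
  R -> R -> Prop := fun u v => regR G r u v /\ rho < r u v.

Section RegularRectangle.

Variables (u0 v0 : R) (G U : R -> R -> Prop) (r : R -> R -> R) (rho : R).
Hypothesis HGopen : rel_open (Kset u0 v0) G.
Hypothesis HGU : forall u v, G u v -> U u v.
Hypothesis Hr : smooth_on U r.
Hypothesis HVII : forall a b c d,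
  Kset u0 v0 a b -> closure2 (regR G r) a b ->
  Kset u0 v0 c d -> closure2 (regR G r) c d ->
  Iminus (Kset u0 v0) a b c d ->
  (forall u v, Jminus (Kset u0 v0) a b u v -> Jplus (Kset u0 v0) c d u v ->
     ~ (u = a /\ v = b) -> regR G r u v \/ regA G r u v) ->
  regR G r a b \/ regA G r a b.
Hypothesis HnoA : forall u v, regA G r u v -> rho < r u v -> False.

Lemma regR_above_rel_open : rel_open (Kset u0 v0) (regR_above G r rho).
Proof.
  apply rel_open_and_gt; [exact (regR_rel_open u0 v0 G U r HGopen HGU (Hr 1%nat))|].
  intros u v [Gu _]. apply (Hr 0%nat), HGU, Gu.
Qed.

Lemma r_le_along_regular_column (a b d : R) :
  b <= d -> (forall v, b <= v <= d -> regR G r a v \/ regA G r a v) ->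
  r a b <= r a d.
Proof.
  intros Hbd Hcol. apply (r_le_along_column U r a b d (Hr 1%nat) Hbd).
  intros v Hv.
  destruct (Hcol v Hv) as [[Gv [Hpv _]] | [Gv [Hpv _]]];
    (split; [apply HGU, Gv | lra]).
Qed.

Lemma regR_above_corner (v1 a b : R) :
  v0 <= v1 -> 0 < a <= u0 -> v1 < b -> rho < r a v1 ->
  (forall u v, 0 <= u <= a -> v1 <= v <= b -> ~ (u = a /\ v = b) -> regR G r u v) ->
  regR_above G r rho a b.
Proof.
  intros Hv1 Ha Hb Hrho Hpast.
  assert (Hcl : closure2 (regR G r) a b).
  { intros eps Heps. set (t := Rmin (eps/2) (b - v1)).
    assert (t <= eps/2) by apply Rmin_l. assert (t <= b - v1) by apply Rmin_r.
    assert (0 < t) by (apply Rmin_pos; lra).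
    exists a, (b - t). split.
    - apply Hpast; [lra | lra | intros [_ ?]; lra].
    - apply in_ball_of_le_half; [lra| |]; apply Rabs_le_between; lra. }
  (* (VII) with q = (0,v1): the causal diamond of q and (a,b) is [0,a] x [v1,b]. *)
  assert (HRA : regR G r a b \/ regA G r a b).
  { apply (HVII a b 0 v1); try (unfold Kset, Iminus; lra).
    - exact Hcl.
    - apply closure2_self, Hpast; [lra | lra | intros [? _]; lra].
    - intros u v [_ [Hua Hvb]] [[Hu _] [_ Hv]] Hne. left. apply Hpast; auto; lra. }
  assert (Hrab : rho < r a b).
  { apply Rlt_le_trans with (r a v1); [exact Hrho|].
    apply r_le_along_regular_column; [lra|]. intros v Hv.
    destruct (Rlt_le_dec v b); [left; apply Hpast; [lra | lra | intros [_ ?]; lra]|].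
    replace v with b by lra. exact HRA. }
  destruct HRA as [HR | HA]; [split; assumption|].
  exfalso. exact (HnoA a b HA Hrab).
Qed.

Lemma regR_above_rect (u1 v1 : R) :
  0 < u1 <= u0 -> v0 <= v1 ->
  (forall u, 0 <= u <= u1 -> regR_above G r rho u v1) ->
  (forall v, v1 <= v -> regR G r 0 v) ->
  forall u v, Kset u1 v1 u v -> regR_above G r rho u v.
Proof.
  intros Hu1 Hv1 Hbottom Hleft.
  apply rel_open_rect_induction; [lra | | exact Hbottom | |].
  - apply rel_open_sub with (Kset u0 v0); [unfold Kset; intros; lra|].
    exact regR_above_rel_open.
  - intros v Hv. split; [apply Hleft, Hv|].
    apply Rlt_le_trans with (r 0 v1); [apply Hbottom; lra|].
    apply r_le_along_regular_column; [exact Hv|]. intros w Hw. left; apply Hleft; lra.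
  - intros a b Ha Hb Hpast. apply (regR_above_corner v1); try lra.
    + apply Hbottom; lra.
    + intros u v Hu Hv Hne. apply Hpast; auto; lra.
Qed.

End RegularRectangle.

Theorem lemma2
  (u0 v0 : R) (Hu0 : 0 < u0) (Hv0 : 0 < v0)
  (G : R -> R -> Prop) (Omega r Tuu Tuv Tvv : R -> R -> R)
  (* G is a globally hyperbolic, relatively open subset of K(u0,v0)
     containing C_in and C_out *)
  (HGK : forall u v, G u v -> Kset u0 v0 u v)
  (HGopen : rel_open (Kset u0 v0) G)
  (HGgh : globally_hyperbolic G)
  (HCin : forall u v, C_in u0 v0 u v -> G u v)
  (HCout : forall u v, C_out v0 u v -> G u v)
  (* smoothness of Omega, r, T on G (via an open neighbourhood U of G) *)
  (U : R -> R -> Prop) (HUopen : open2 U) (HGU : forall u v, G u v -> U u v)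
  (HsO : smooth_on U Omega) (Hsr : smooth_on U r)
  (HsTuu : smooth_on U Tuu) (HsTuv : smooth_on U Tuv) (HsTvv : smooth_on U Tvv)
  (HOpos : forall u v, G u v -> 0 < Omega u v)
  (Hrnn : forall u v, G u v -> 0 <= r u v)
  (Hrpos : forall u v, C_in u0 v0 u v \/ C_out v0 u v -> 0 < r u v)
  (* Einstein equations in spherical symmetry *)
  (Hruu : forall u v, G u v ->
     pu (fun x y => / (Omega x y) ^ 2 * pu r x y) u v
     = - r u v * / (Omega u v) ^ 2 * Tuu u v)
  (Hrvv : forall u v, G u v ->
     pv (fun x y => / (Omega x y) ^ 2 * pv r x y) u v
     = - r u v * / (Omega u v) ^ 2 * Tvv u v)
  (Hmu : forall u v, G u v ->
     pu (hawking_mass Omega r) u v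
     = 2 * (r u v) ^ 2 * / (Omega u v) ^ 2
         * (Tuv u v * pu r u v - Tuu u v * pv r u v))
  (Hmv : forall u v, G u v ->
     pv (hawking_mass Omega r) u v
     = 2 * (r u v) ^ 2 * / (Omega u v) ^ 2
         * (Tuv u v * pv r u v - Tvv u v * pu r u v))
  (* r_+ = sup_{C_out} r and m_+ = sup_{C_out} m, both finite: (III), (IV) *)
  (rplus mplus : R)
  (Hrplus : is_lub (fun x => exists v, v0 <= v /\ x = r 0 v) rplus)
  (Hmplus : is_lub (fun x => exists v, v0 <= v /\ x = hawking_mass Omega r 0 v) mplus)
  (* (I) *)
  (HT : forall u v, G u v -> 0 <= Tuu u v /\ 0 <= Tuv u v /\ 0 <= Tvv u v)
  (* (II) J^-(G) subset G *)
  (HJG : forall a b u v, G a b -> Jminus (Kset u0 v0) a b u v -> G u v)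
  (* (IV) m >= 0 on C_out *)
  (Hmnn : forall u v, C_out v0 u v -> 0 <= hawking_mass Omega r u v)
  (* (V), (VI) *)
  (Hur : forall u v, C_out v0 u v -> pu r u v < 0)
  (Hvr : forall u v, C_out v0 u v -> pv r u v > 0)
  (* (VII), closures taken in K(u0,v0) *)
  (HVII : forall a b c d,
     Kset u0 v0 a b -> closure2 (regR G r) a b ->
     Kset u0 v0 c d -> closure2 (regR G r) c d ->
     Iminus (Kset u0 v0) a b c d ->
     (forall u v, Jminus (Kset u0 v0) a b u v -> Jplus (Kset u0 v0) c d u v ->
        ~ (u = a /\ v = b) -> regR G r u v \/ regA G r u v) ->
     regR G r a b \/ regA G r a b)
  (delta : R) (Hdelta : 0 < delta)
  (* condition (A) on A cap W *)
  (HA : forall u v, regA G r u v -> regW G r rplus delta u v ->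
     Tuv u v * / (Omega u v) ^ 2 < 1 / (4 * (r u v) ^ 2))
  (* A cap W is empty *)
  (HAW : forall u v, ~ (regA G r u v /\ regW G r rplus delta u v)) :
  exists u1 v1, 0 < u1 <= u0 /\ v0 <= v1 /\
    forall u v, Kset u1 v1 u v -> regW G r rplus delta u v /\ regR G r u v.
Proof.
  set (rho := rplus - delta).
  assert (Hout : forall v, v0 <= v -> regR G r 0 v).
  { intros v Hv. assert (C : C_out v0 0 v) by (split; lra).
    split; [apply HCout, C | split; [apply Hvr, C | apply Hur, C]]. }
  assert (HnoA : forall u v, regA G r u v -> rho < r u v -> False).
  { intros u v HAuv Hr. apply (HAW u v). split; [exact HAuv|].
    split; [apply HAuv | unfold rho in Hr; lra]. }
  destruct (is_lub_lt _ rplus rho Hrplus) as [x [[v1 [Hv1 ->]] Hr1]];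
    [unfold rho; lra|].
  destruct (regR_above_rel_open u0 v0 G U r rho HGopen HGU Hsr 0 v1
              (conj (Hout v1 Hv1) Hr1)) as [e [He Hball]].
  set (u1 := Rmin u0 (e/2)).
  assert (Hu1 : 0 < u1 <= u0) by (split; [apply Rmin_pos | apply Rmin_l]; lra).
  assert (Hu1e : u1 <= e/2) by apply Rmin_r.
  assert (Hbottom : forall u, 0 <= u <= u1 -> regR_above G r rho u v1).
  { intros u Hu. apply Hball; [|unfold Kset; lra].
    apply in_ball_of_le_half; [lra| |]; apply Rabs_le_between; lra. }
  exists u1, v1. split; [exact Hu1|]. split; [exact Hv1|].
  intros u v Huv.
  destruct (regR_above_rect u0 v0 G U r rho HGopen HGU Hsr HVII HnoA u1 v1
              Hu1 Hv1 Hbottom (fun v Hv => Hout v ltac:(lra)) u v Huv) as [HR Hr].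
  split; [split; [apply HR | unfold rho in Hr; lra] | exact HR].
Qed.
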